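(* If $\mathcal E$ is a cofull right functional $A$-module, then the ring $\mathcal K_A(\mathcal E)$ is quadratik and is an essential ideal in itself, i.e. the map $\mathcal K_A(\mathcal E)\to\mathrm{Hom}_{\mathcal K_A(\mathcal E)}(\mathcal K_A(\mathcal E))$, $x\mapsto(y\mapsto xy)$, is injective.
   Context: $G$ is a discrete group; $(A,\alpha)$ is an associative ring (not necessarily commutative or unital) with $G$-action. A ring $R$ is quadratik if every element of $R$ is a finite sum of products $ab$ with $a,b\in R$. A right functional $A$-module is a right $A$-module $\mathcal E$ with a $G$-action $S$ by additive bijections with $S_g(\xi a)=S_g(\xi)\alpha_g(a)$, together with a functional space $\Theta_A(\mathcal E)\subseteq\mathrm{Hom}_A(\mathcal E,A)$ which is a $G$-invariant left $A$-submodule. The compact operators $\mathcal K_A(\mathcal E)$ form the ring of finite sums of operators $\theta_{\eta,\varphi}(\xi)=\eta\varphi(\xi)$ ($\eta\in\mathcal E$, $\varphi\in\Theta_A(\mathcal E)$) under composition. $\mathcal E$ is cofull if every element of $\mathcal E$ is a finite sum of elements $\xi\varphi(\eta)$ with $\xi,\eta\in\mathcal E$, $\varphi\in\Theta_A(\mathcal E)$. *)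

From mathcomp Require Import all_boot all_algebra.
Set Implicit Arguments. Unset Strict Implicit. Unset Printing Implicit Defensive.
Import GRing.Theory.
Local Open Scope ring_scope.

Record nuring_axioms (A : zmodType) (mul : A -> A -> A) : Prop := {
  nur_mulA : forall a b c, mul a (mul b c) = mul (mul a b) c;
  nur_mulDl : forall a b c, mul (a + b) c = mul a c + mul b c;
  nur_mulDr : forall a b c, mul a (b + c) = mul a b + mul a c }.

Record group_axioms (G : Type) (gm : G -> G -> G) (ge : G) (gi : G -> G)
  : Prop := {
  grp_assoc : forall g h k, gm g (gm h k) = gm (gm g h) k;
  grp_id_l : forall g, gm ge g = g;
  grp_inv_l : forall g, gm (gi g) g = ge }.

Record ring_action_axioms (G : Type) (gm : G -> G -> G) (ge : G)
  (A : zmodType) (mul : A -> A -> A) (alpha : G -> A -> A) : Prop := {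
  ra_add : forall g a b, alpha g (a + b) = alpha g a + alpha g b;
  ra_mul : forall g a b, alpha g (mul a b) = mul (alpha g a) (alpha g b);
  ra_bij : forall g, bijective (alpha g);
  ra_one : forall a, alpha ge a = a;
  ra_comp : forall g h a, alpha (gm g h) a = alpha g (alpha h a) }.

Record rmodule_axioms (A : zmodType) (mul : A -> A -> A) (E : zmodType)
  (act : E -> A -> E) : Prop := {
  rm_addl : forall x y a, act (x + y) a = act x a + act y a;
  rm_addr : forall x a b, act x (a + b) = act x a + act x b;
  rm_assoc : forall x a b, act x (mul a b) = act (act x a) b }.

Definition is_hom (A : zmodType) (mul : A -> A -> A) (E : zmodType)
  (act : E -> A -> E) (phi : E -> A) : Prop :=
  (forall x y, phi (x + y) = phi x + phi y) /\
  (forall x a, phi (act x a) = mul (phi x) a).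

(* G acts on Hom_A(E, A) by
   (g . phi)(x) = alpha_g (phi (S_{g^-1} x)). *)
Record functional_module_axioms (G : Type) (gm : G -> G -> G) (ge : G)
  (gi : G -> G) (A : zmodType) (mul : A -> A -> A) (alpha : G -> A -> A)
  (E : zmodType) (act : E -> A -> E) (S : G -> E -> E)
  (Theta : (E -> A) -> Prop) : Prop := {
  fm_rmod : rmodule_axioms mul act;
  fm_S_add : forall g x y, S g (x + y) = S g x + S g y;
  fm_S_bij : forall g, bijective (S g);
  fm_S_one : forall x, S ge x = x;
  fm_S_comp : forall g h x, S (gm g h) x = S g (S h x);
  fm_S_act : forall g x a, S g (act x a) = act (S g x) (alpha g a);
  fm_Theta_hom : forall phi, Theta phi -> is_hom mul act phi;
  fm_Theta_0 : Theta (fun _ => 0);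
  fm_Theta_add : forall phi psi, Theta phi -> Theta psi ->
      Theta (fun x => phi x + psi x);
  fm_Theta_opp : forall phi, Theta phi -> Theta (fun x => - phi x);
  fm_Theta_scale : forall a phi, Theta phi -> Theta (fun x => mul a (phi x));
  fm_Theta_inv : forall g phi, Theta phi ->
      Theta (fun x => alpha g (phi (S (gi g) x))) }.

(* T is in K_A(E): a finite sum of theta_{eta,phi}, phi in Theta. *)
Definition compact_op (A : zmodType) (E : zmodType) (act : E -> A -> E)
  (Theta : (E -> A) -> Prop) (T : E -> E) : Prop :=
  exists (n : nat) (eta : 'I_n -> E) (phi : 'I_n -> E -> A),
    (forall i, Theta (phi i)) /\
    T = (fun x => \sum_(i < n) act (eta i) (phi i x)).

Definition cofull (A : zmodType) (E : zmodType) (act : E -> A -> E)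
  (Theta : (E -> A) -> Prop) : Prop :=
  forall z : E, exists (n : nat) (xi eta : 'I_n -> E) (phi : 'I_n -> E -> A),
    (forall i, Theta (phi i)) /\
    z = \sum_(i < n) act (xi i) (phi i (eta i)).

(* The ring K_A(E) (operations: pointwise sum, composition) is quadratik. *)
Definition compact_quadratik (A : zmodType) (E : zmodType)
  (act : E -> A -> E) (Theta : (E -> A) -> Prop) : Prop :=
  forall T, compact_op act Theta T ->
    exists (n : nat) (x y : 'I_n -> E -> E),
      (forall i, compact_op act Theta (x i) /\ compact_op act Theta (y i)) /\
      T = (fun z => \sum_(i < n) x i (y i z)).

Definition compact_self_essential (A : zmodType) (E : zmodType)
  (act : E -> A -> E) (Theta : (E -> A) -> Prop) : Prop :=
  forall x x' : E -> E, compact_op act Theta x -> compact_op act Theta x' ->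
    (forall y, compact_op act Theta y -> (fun z => x (y z)) = (fun z => x' (y z))) ->
    x = x'.

(* Cofullness says that every vector is a sum of vectors [xi phi'(eta)], and
   [theta_{xi phi'(eta), phi} = theta_{xi, phi'} o theta_{eta, phi}].  Hence
   every rank-one operator, and so every compact operator, is a sum of
   products of compact operators.  For essentiality, if [x] and [x'] agree on
   all products [x o theta_{xi, phi}], they agree on the vectors
   [theta_{xi, phi} eta = xi phi(eta)], which span E additively. *)
From mathcomp Require Import all_boot all_algebra.
From Stdlib Require Import FunctionalExtensionality.
Set Implicit Arguments. Unset Strict Implicit.
Import GRing.Theory.
Local Open Scope ring_scope.

Section CompactOperators.
Variables (A : zmodType) (mul : A -> A -> A) (E : zmodType)
  (act : E -> A -> E) (Theta : (E -> A) -> Prop).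
Hypothesis actM : rmodule_axioms mul act.
Hypothesis Theta_hom : forall phi, Theta phi -> is_hom mul act phi.

Definition theta (eta : E) (phi : E -> A) : E -> E := fun x => act eta (phi x).

Definition sum_of_products (T : E -> E) : Prop :=
  exists (n : nat) (x y : 'I_n -> E -> E),
    (forall i, compact_op act Theta (x i) /\ compact_op act Theta (y i)) /\
    T = (fun z => \sum_(i < n) x i (y i z)).

Lemma act0l a : act 0 a = 0.
Proof.
apply: (addrI (act 0 a)).
by rewrite -(rm_addl actM) !addr0.
Qed.

Lemma act0r x : act x 0 = 0.
Proof.
apply: (addrI (act x 0)).
by rewrite -(rm_addr actM) !addr0.
Qed.

Lemma act_suml I (r : seq I) (P : pred I) (F : I -> E) a :
  act (\sum_(i <- r | P i) F i) a = \sum_(i <- r | P i) act (F i) a.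
Proof.
exact: (big_morph (act^~ a) (fun x y => rm_addl actM x y a) (act0l a)).
Qed.

Lemma hom0 phi : is_hom mul act phi -> phi 0 = 0.
Proof.
move=> [phiD _]; apply: (addrI (phi 0)).
by rewrite -phiD !addr0.
Qed.

Lemma compact_op_theta eta phi : Theta phi -> compact_op act Theta (theta eta phi).
Proof.
move=> Theta_phi; exists 1%N, (fun _ => eta), (fun _ => phi); split => //.
by apply: functional_extensionality => z; rewrite big_ord1.
Qed.

Lemma compact_op_sum T n (F : 'I_n -> E) : compact_op act Theta T ->
  T (\sum_(i < n) F i) = \sum_(i < n) T (F i).
Proof.
move=> [m [eta [phi [Theta_phi ->]]]].
have phi_hom i := Theta_hom (Theta_phi i).
rewrite exchange_big /=; apply: eq_bigr => i _.
rewrite -(big_morph (act (eta i)) (rm_addr actM (eta i)) (act0r (eta i))).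
by rewrite -(big_morph (phi i) (proj1 (phi_hom i)) (hom0 (phi_hom i))).
Qed.

Lemma theta_comp xi phi' eta phi : Theta phi' ->
  theta (act xi (phi' eta)) phi = fun z => theta xi phi' (theta eta phi z).
Proof.
move=> /Theta_hom [_ phi'M]; apply: functional_extensionality => z.
by rewrite /theta phi'M (rm_assoc actM).
Qed.

Lemma sum_of_products0 : sum_of_products (fun _ => 0).
Proof.
exists 0%N, (fun _ => id), (fun _ => id); split; first by case.
by apply: functional_extensionality => z; rewrite big_ord0.
Qed.

Lemma sum_of_productsD f g : sum_of_products f -> sum_of_products g ->
  sum_of_products (fun z => f z + g z).
Proof.
move=> [n [x [y [xy_cop ->]]]] [m [x' [y' [xy'_cop ->]]]].
pose glue T (u : 'I_n -> T) (v : 'I_m -> T) i :=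
  match split i with inl j => u j | inr j => v j end.
exists (n + m)%N, (glue _ x x'), (glue _ y y'); split.
  by move=> i; rewrite /glue; case: (split i) => j; [apply: xy_cop | apply: xy'_cop].
apply: functional_extensionality => z; rewrite big_split_ord /=.
congr (_ + _); apply: eq_bigr => i _.
  by rewrite /glue (unsplitK (inl i) : split (lshift m i) = inl i).
by rewrite /glue (unsplitK (inr i) : split (rshift n i) = inr i).
Qed.

Lemma sum_of_products_sum n (F : 'I_n -> E -> E) :
  (forall i, sum_of_products (F i)) ->
  sum_of_products (fun z => \sum_(i < n) F i z).
Proof.
elim: n F => [|n IH] F F_sp.
  rewrite (_ : (fun z => _) = fun _ => 0); first exact: sum_of_products0.
  by apply: functional_extensionality => z; rewrite big_ord0.
rewrite (_ : (fun z => _) =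
    fun z => (fun z => \sum_(i < n) F (widen_ord (leqnSn n) i) z) z + F ord_max z).
  by apply: sum_of_productsD; [apply: IH => i | ]; apply: F_sp.
by apply: functional_extensionality => z; rewrite big_ord_recr.
Qed.

Hypothesis E_cofull : cofull act Theta.

Lemma theta_sum_of_products eta phi : Theta phi -> sum_of_products (theta eta phi).
Proof.
move=> Theta_phi; have [n [xi [zeta [phi' [Theta_phi' ->]]]]] := E_cofull eta.
have -> : theta (\sum_(j < n) act (xi j) (phi' j (zeta j))) phi =
    fun z => \sum_(j < n) theta (act (xi j) (phi' j (zeta j))) phi z.
  by apply: functional_extensionality => z; rewrite /theta act_suml.
apply: sum_of_products_sum => j; rewrite theta_comp //.
exists 1%N, (fun _ => theta (xi j) (phi' j)), (fun _ => theta (zeta j) phi).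
split; first by split; apply: compact_op_theta.
by apply: functional_extensionality => z; rewrite big_ord1.
Qed.

Lemma compact_quadratik_cofull : compact_quadratik act Theta.
Proof.
move=> T [n [eta [phi [Theta_phi ->]]]].
by apply: sum_of_products_sum => i; apply: theta_sum_of_products.
Qed.

Lemma compact_self_essential_cofull : compact_self_essential act Theta.
Proof.
move=> x x' x_cop x'_cop x_x'_eq; apply: functional_extensionality => z.
have [n [xi [eta [phi [Theta_phi ->]]]]] := E_cofull z.
rewrite (compact_op_sum _ x_cop) (compact_op_sum _ x'_cop).
apply: eq_bigr => j _.
exact: (congr1 (@^~ (eta j)) (x_x'_eq _ (compact_op_theta (xi j) (Theta_phi j)))).
Qed.

End CompactOperators.

Theorem lemma2p14 (G : Type) (gm : G -> G -> G) (ge : G) (gi : G -> G)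
  (A : zmodType) (mul : A -> A -> A) (alpha : G -> A -> A)
  (E : zmodType) (act : E -> A -> E) (S : G -> E -> E)
  (Theta : (E -> A) -> Prop) :
  group_axioms gm ge gi ->
  nuring_axioms mul ->
  ring_action_axioms gm ge mul alpha ->
  functional_module_axioms gm ge gi mul alpha act S Theta ->
  cofull act Theta ->
  compact_quadratik act Theta /\ compact_self_essential act Theta.
Proof.
move=> _ _ _ E_fm E_cofull; have actM := fm_rmod E_fm.
split; first exact: (compact_quadratik_cofull actM (fm_Theta_hom E_fm)).
exact: (compact_self_essential_cofull actM (fm_Theta_hom E_fm)).
Qed.
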